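(* Let $\Lambda=[\mu_1,L_1]\cup[\mu_2,L_2]$ with $0<\mu_1<L_1<\mu_2<L_2$. There exists a real polynomial $\sigma$ of degree $2$ with $\sigma(\Lambda)\subseteq[-1,1]$ such that, for every $n\ge1$, $T_n\circ\sigma$ is the solution of $\max\{p(0):p\in\mathbb{R}_{2n}[X],\ \sup_{\lambda\in\Lambda}|p(\lambda)|\le1\}$, if and only if $L_1-\mu_1=L_2-\mu_2$.
   Context: $\mathbb{R}_N[X]$ is the set of real polynomials of degree at most $N$. $T_n$ is the Chebyshev polynomial of the first kind of degree $n$. *)

From HB Require Import structures.
From mathcomp Require Import all_boot all_order all_algebra.
From mathcomp Require Import reals.
Set Implicit Arguments. Unset Strict Implicit. Unset Printing Implicit Defensive.
Import Order.TTheory GRing.Theory Num.Theory.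
Local Open Scope ring_scope.

(* Chebyshev polynomials of the first kind:
   T_0 = 1, T_1 = X, T_(n+2) = 2 X T_(n+1) - T_n. *)
Fixpoint cheb_pair (R : ringType) (n : nat) : {poly R} * {poly R} :=
  match n with
  | 0%N => (1, 'X)
  | n'.+1 => let: (a, b) := cheb_pair R n' in (b, 2%:R *: 'X * b - a)
  end.

Definition chebT (R : ringType) (n : nat) : {poly R} := (cheb_pair R n).1.

Definition Lambda (R : realType) (mu1 L1 mu2 L2 : R) (x : R) : Prop :=
  (mu1 <= x <= L1) \/ (mu2 <= x <= L2).

Definition feasible (R : realType) (mu1 L1 mu2 L2 : R) (n : nat) (p : {poly R}) : Prop :=
  (size p <= (2 * n).+1)%N /\ forall x, Lambda mu1 L1 mu2 L2 x -> `|p.[x]| <= 1.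

Definition is_solution (R : realType) (mu1 L1 mu2 L2 : R) (n : nat) (q : {poly R}) : Prop :=
  feasible mu1 L1 mu2 L2 n q /\
  forall p, feasible mu1 L1 mu2 L2 n p -> p.[0] <= q.[0].

(* If L1 - mu1 = L2 - mu2, the quadratic sigma below maps each component of
   Lambda onto [-1, 1], so q := T_n o sigma takes the values +-1 alternately at
   n + 1 points of each component.  A competitor p with p(0) > q(0) >= 1 would
   make q - (q(0) / p(0)) p vanish at 0 and change sign n times on each
   component: 2n + 1 roots for a polynomial of degree 2n.

   Conversely, comparing with an affine polynomial for n = 1 gives
   sigma(0) > 1.  If sigma mapped an interval (l, r) of [0, +oo) free of points
   of Lambda onto a nondegenerate subinterval of [-1, 1], then for large n the
   polynomial T_n o sigma would vanish at two points a, a' of (l, r); replacing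
   its factor (X - a)(X - a') by (X - a)(X - a') - e (X - mu1) keeps it bounded
   by 1 on Lambda and increases its value at 0.  Excluding this on (0, mu1), on
   the gap (L1, mu2) and beyond L2 forces sigma(mu1) = 1,
   sigma(L1) = sigma(mu2) = -1, and then sigma(L2) = 1 forces L2 to be the
   mirror image L1 + mu2 - mu1 of mu1. *)

From HB Require Import structures.
From mathcomp Require Import all_boot all_order all_algebra.
From mathcomp Require Import reals trigo polyrcf.
From mathcomp Require Import ring lra zify.
Import Order.TTheory GRing.Theory Num.Theory.

Set Implicit Arguments.
Unset Strict Implicit.
Unset Printing Implicit Defensive.

Local Open Scope ring_scope.

(** * Chebyshev polynomials *)

Lemma chebT0 (R : nzRingType) : chebT R 0 = 1. Proof. by []. Qed.

Lemma chebT1 (R : nzRingType) : chebT R 1 = 'X. Proof. by []. Qed.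

Lemma chebTSS (R : nzRingType) n :
  chebT R n.+2 = 2%:R *: 'X * chebT R n.+1 - chebT R n.
Proof. by rewrite /chebT /=; case: (cheb_pair R n). Qed.

Lemma horner_chebTSS (R : comNzRingType) n (x : R) :
  (chebT R n.+2).[x] = 2 * x * (chebT R n.+1).[x] - (chebT R n).[x].
Proof. by rewrite chebTSS hornerD hornerN hornerM hornerZ hornerX. Qed.

Lemma size_chebT (R : nzRingType) n : (size (chebT R n) <= n.+1)%N.
Proof.
suff: (size (chebT R n) <= n.+1)%N /\ (size (chebT R n.+1) <= n.+2)%N by case.
elim: n => [|n [IH1 IH2]]; first by rewrite chebT0 chebT1 size_poly1 size_polyX.
split=> //; rewrite chebTSS.
apply: leq_trans (size_polyD _ _) _; rewrite size_polyN geq_max.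
apply/andP; split; last by lia.
apply: leq_trans (size_polyMleq _ _) _.
have: (size (2%:R *: 'X : {poly R}) <= 2)%N.
  by apply: leq_trans (size_scale_leq _ _) _; rewrite size_polyX.
move: IH2; move: (size (chebT R n.+1)) (size (2%:R *: 'X : {poly R})); lia.
Qed.

Lemma chebT_N (R : comNzRingType) n (x : R) :
  (chebT R n).[- x] = (-1) ^+ n * (chebT R n).[x].
Proof.
suff: (chebT R n).[- x] = (-1) ^+ n * (chebT R n).[x] /\
      (chebT R n.+1).[- x] = (-1) ^+ n.+1 * (chebT R n.+1).[x] by case.
elim: n => [|n [IH1 IH2]].
  by rewrite chebT0 chebT1 !hornerC !hornerX expr1 mul1r mulN1r.
by split=> //; rewrite !horner_chebTSS IH1 IH2 !exprS; ring.
Qed.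

Lemma chebT_ge1 (R : realDomainType) n (x : R) : 1 <= x -> 1 <= (chebT R n).[x].
Proof.
move=> x_ge1.
suff: 1 <= (chebT R n).[x] <= (chebT R n.+1).[x] by case/andP.
elim: n => [|n /andP[IH1 IH2]]; first by rewrite chebT0 chebT1 hornerC hornerX lexx.
rewrite horner_chebTSS; apply/andP; split; nra.
Qed.

Lemma chebT_cos (R : realType) n (t : R) : (chebT R n).[cos t] = cos (n%:R * t).
Proof.
suff: (chebT R n).[cos t] = cos (n%:R * t) /\
      (chebT R n.+1).[cos t] = cos (n.+1%:R * t) by case.
elim: n => [|n [IH1 IH2]].
  by rewrite chebT0 chebT1 hornerC hornerX mul0r cos0 mul1r.
split=> //; rewrite horner_chebTSS IH1 IH2.
have -> : n.+2%:R * t = n.+1%:R * t + t by rewrite -addn1 natrD; ring.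
have -> : n%:R * t = n.+1%:R * t - t by rewrite -addn1 natrD; ring.
rewrite cosB cosD; ring.
Qed.

Lemma chebT_bound (R : realType) n (x : R) : -1 <= x <= 1 -> `|(chebT R n).[x]| <= 1.
Proof.
move=> x_in; rewrite -(acosK x_in) chebT_cos ler_norml cos_le1 andbT.
exact: cos_geN1.
Qed.

Lemma cosD_natpi (R : realType) (t : R) k : cos (t + k%:R * pi) = (-1) ^+ k * cos t.
Proof.
elim: k => [|k IH]; first by rewrite mul0r addr0 mul1r.
by rewrite -addn1 natrD mulrDl mul1r addrA cosDpi IH exprD expr1 mulrN1 mulNr.
Qed.

Lemma chebT_cos_natpi (R : realType) n k : (0 < n)%N ->
  (chebT R n).[cos (k%:R * (pi / n%:R))] = (-1) ^+ k.
Proof.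
move=> n_gt0; rewrite chebT_cos.
have -> : n%:R * (k%:R * (pi / n%:R)) = 0 + k%:R * pi :> R.
  by field; rewrite pnatr_eq0 -lt0n.
by rewrite cosD_natpi cos0 mulr1.
Qed.

Lemma cos_natpi_decr (R : realType) n k : (k < n)%N ->
  cos (k.+1%:R * (pi / n%:R)) < cos (k%:R * (pi / n%:R)) :> R.
Proof.
move=> kn; have n_gt0 : 0 < n%:R :> R by rewrite ltr0n (leq_ltn_trans _ kn).
have P_gt0 : 0 < pi / n%:R :> R by rewrite divr_gt0 // pi_gt0.
have in0pi i : (i <= n)%N -> i%:R * (pi / n%:R) \in `[0, pi :> R].
  move=> i_le; rewrite in_itv /= mulr_ge0 ?ler0n ?(ltW P_gt0) //=.
  by rewrite mulrA ler_pdivrMr // mulrC ler_pM2l ?pi_gt0 // ler_nat.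
by rewrite (ltr_cos (in0pi _ (ltnW kn)) (in0pi _ kn)) ltr_pM2r // ltr_nat.
Qed.

Lemma chebT_root_cos (R : realType) n j : (0 < n)%N ->
  root (chebT R n) (cos ((j%:R + 2^-1) * (pi / n%:R))).
Proof.
move=> n_gt0; rewrite /root chebT_cos.
have -> : n%:R * ((j%:R + 2^-1) * (pi / n%:R)) = pi / 2 + j%:R * pi :> R.
  by field; rewrite pnatr_eq0 -lt0n.
by rewrite cosD_natpi cos_pihalf mulr0.
Qed.

Lemma chebT_two_roots (R : realType) (u w : R) : -1 <= u -> u < w -> w <= 1 ->
  exists2 n, (0 < n)%N & exists y1 y2, [/\ y1 != y2, u < y1 < w, u < y2 < w,
    root (chebT R n) y1 & root (chebT R n) y2].
Proof.
move=> u_ge uw w_le.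
have u_in : u \in `[-1, 1] by rewrite in_itv /= u_ge (le_trans (ltW uw)).
have w_in : w \in `[-1, 1] by rewrite in_itv /= w_le (le_trans u_ge (ltW uw)).
set a := acos w; set b := acos u.
have [a_in b_in] : a \in `[0, pi] /\ b \in `[0, pi].
  by rewrite !in_itv /= !acos_ge0 ?acos_lepi.
have in0pi : forall t, a < t < b -> t \in `[0, pi].
  move=> t /andP[a_t t_b]; move: a_in b_in; rewrite !in_itv /=.
  by move=> /andP[a0 _] /andP[_ bpi]; lra.
have cos_in : forall t, a < t < b -> u < cos t < w.
  move=> t tab; have /andP[a_t t_b] := tab; have t_in := in0pi t tab.
  by rewrite -(acosK u_in) -(acosK w_in) -/a -/b (ltr_cos t_in b_in) (ltr_cos a_in t_in) a_t t_b.
have ab : a < b by rewrite -ltr_cos // !acosK.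
have d_gt0 : 0 < b - a by rewrite subr_gt0.
have pi_gt0 := pi_gt0 R.
(* The zeros of T_n are the cos ((j + 1/2) pi / n); with 3 pi / n < b - a, two
   consecutive angles fall in (acos w, acos u). *)
pose n := (Num.truncn (3 * (pi : R) / (b - a))).+1.
pose P : R := pi / n%:R.
have P_gt0 : 0 < P by rewrite divr_gt0 ?ltr0n.
have P_small : 3 * P < b - a.
  have := truncn_itv (ltW (divr_gt0 (mulr_gt0 (ltr0n _ 3) pi_gt0) d_gt0)).
  rewrite ltr_pdivrMr // => /andP[_ n_large].
  rewrite /P mulrA ltr_pdivrMr ?ltr0n // mulrC.
  by rewrite [pi * _]mulrC [(b - a) * _]mulrC.
pose j := Num.truncn (a / P).
have /andP[ja aj] : j%:R * P <= a < j%:R * P + P.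
  have a_ge0 : 0 <= a by move: a_in; rewrite in_itv => /andP[].
  have := truncn_itv (divr_ge0 a_ge0 (ltW P_gt0)).
  by rewrite -/j ler_pdivlMr // ltr_pdivrMr // mulrSr mulrDl mul1r.
pose t i := (i%:R + 2^-1) * P.
have t1 : a < t j.+1 < b.
  have -> : t j.+1 = j%:R * P + P + P / 2 by rewrite /t -natr1; field.
  by apply/andP; split; lra.
have t2 : a < t j.+2 < b.
  have -> : t j.+2 = j%:R * P + 2 * P + P / 2 by rewrite /t -addn2 natrD; field.
  by apply/andP; split; lra.
exists n => //; exists (cos (t j.+1)), (cos (t j.+2)); split.
- rewrite gt_eqF // (ltr_cos (in0pi _ t1) (in0pi _ t2)).
  by rewrite /t ltr_pM2r // ltrD2r ltr_nat.
- exact: cos_in.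
- exact: cos_in.
- exact: chebT_root_cos.
- exact: chebT_root_cos.
Qed.

(** * Equioscillation *)

Lemma incr_first_le_last (R : numDomainType) (f : nat -> R) m :
  (forall k, (k < m)%N -> f k < f k.+1) -> f 0%N <= f m.
Proof.
elim: m => // m IH f_incr.
exact: le_trans (IH (fun k kn => f_incr k (ltnW kn))) (ltW (f_incr m (ltnSn m))).
Qed.

Lemma sign_changes_roots (R : rcfType) (r : {poly R}) m (f : nat -> R) :
  (forall k, (k < m)%N -> f k < f k.+1) ->
  (forall k, (k < m)%N -> r.[f k] * r.[f k.+1] < 0) ->
  exists s : seq R, [/\ size s = m, uniq s, all (root r) s
                      & all (fun z => f 0%N < z < f m) s].
Proof.
elim: m => [|m IH] f_incr r_sign; first by exists [::].
have [s [size_s uniq_s root_s in_s]] := IH (fun k kn => f_incr k (ltnW kn))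
  (fun k kn => r_sign k (ltnW kn)).
have [z /[!in_itv] /= /andP[fm_z z_fm1] root_z] :=
  poly_ivtoo (ltW (f_incr m (ltnSn m))) (r_sign m (ltnSn m)).
have f0_fm : f 0%N <= f m := incr_first_le_last (fun k kn => f_incr k (ltnW kn)).
exists (rcons s z); rewrite size_rcons size_s rcons_uniq all_rcons root_z root_s uniq_s andbT.
split=> //.
- apply/negP => /(allP in_s z) /andP[_]; lra.
- rewrite all_rcons (le_lt_trans f0_fm fm_z) z_fm1 /=.
  apply/allP => y /(allP in_s y) /andP[f0_y y_fm]; rewrite f0_y /=.
  exact: lt_trans y_fm (f_incr m (ltnSn m)).
Qed.

Lemma alternating_sub_scale (R : realFieldType) k (t y y' : R) :
  0 <= t < 1 -> `|y| <= 1 -> `|y'| <= 1 ->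
  ((-1) ^+ k - t * y) * ((-1) ^+ k.+1 - t * y') < 0.
Proof.
move=> /andP[t_ge0 t_lt1] /[!ler_norml] /andP[y_ge y_le] /andP[y'_ge y'_le].
have [ty_gt ty_lt] : -1 < t * y /\ t * y < 1 by split; nra.
have [ty'_gt ty'_lt] : -1 < t * y' /\ t * y' < 1 by split; nra.
by rewrite exprS -signr_odd; case: (odd k); rewrite /= ?expr0 ?expr1; nra.
Qed.

Lemma equioscillation_solution (R : realType) (mu1 L1 mu2 L2 : R) n
    (q : {poly R}) (x1 x2 : nat -> R) :
  feasible mu1 L1 mu2 L2 n q -> 0 < q.[0] ->
  0 < x1 0%N -> x1 n < x2 0%N ->
  (forall k, (k < n)%N -> x1 k < x1 k.+1 /\ x2 k < x2 k.+1) ->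
  (forall k, (k <= n)%N -> Lambda mu1 L1 mu2 L2 (x1 k) /\ Lambda mu1 L1 mu2 L2 (x2 k)) ->
  (forall k, (k <= n)%N -> q.[x1 k] = (-1) ^+ k /\ q.[x2 k] = (-1) ^+ (n + k)) ->
  is_solution mu1 L1 mu2 L2 n q.
Proof.
move=> q_feas q0_gt0 x10_gt0 x1n_x20 x_incr x_in q_x; split=> // p [size_p p_le1].
rewrite leNgt; apply/negP => q0_p0.
have p0_gt0 : 0 < p.[0] by apply: lt_trans q0_p0.
pose t := q.[0] / p.[0].
have t_in : 0 <= t < 1.
  by rewrite divr_ge0 ?ltW //= ltr_pdivrMr // mul1r.
pose r := q - t *: p.
have horner_r x : r.[x] = q.[x] - t * p.[x] by rewrite hornerD hornerN hornerZ.
have r_x1 k : (k < n)%N -> r.[x1 k] * r.[x1 k.+1] < 0.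
  move=> kn; have [kn' kn1] := (ltnW kn, kn).
  rewrite !horner_r (q_x k kn').1 (q_x k.+1 kn1).1.
  by apply: alternating_sub_scale; rewrite ?p_le1 //; [exact: (x_in k kn').1 | exact: (x_in k.+1 kn1).1].
have r_x2 k : (k < n)%N -> r.[x2 k] * r.[x2 k.+1] < 0.
  move=> kn; have [kn' kn1] := (ltnW kn, kn).
  rewrite !horner_r (q_x k kn').2 (q_x k.+1 kn1).2 addnS.
  by apply: alternating_sub_scale; rewrite ?p_le1 //; [exact: (x_in k kn').2 | exact: (x_in k.+1 kn1).2].
have [s1 [size_s1 uniq_s1 root_s1 in_s1]] :=
  sign_changes_roots (fun k kn => (x_incr k kn).1) r_x1.
have [s2 [size_s2 uniq_s2 root_s2 in_s2]] :=
  sign_changes_roots (fun k kn => (x_incr k kn).2) r_x2.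
have x10_x1n : x1 0%N <= x1 n := incr_first_le_last (fun k kn => (x_incr k kn).1).
have r_neq0 : r != 0.
  apply/negP => /eqP r0; have := horner_r (x1 0%N); rewrite r0 horner0 (q_x 0%N isT).1.
  have := p_le1 _ (x_in 0%N isT).1; rewrite ler_norml => /andP[? ?].
  move: t_in => /andP[? ?]; nra.
have := max_poly_roots r_neq0 (rs := 0 :: s1 ++ s2).
have root_r0 : root r 0 by rewrite /root horner_r /t divfK ?subrr // gt_eqF.
rewrite /= all_cat root_r0 root_s1 root_s2.
rewrite mem_cat negb_or cat_uniq uniq_s1 uniq_s2 size_cat size_s1 size_s2 /= !andbT.
have notin_s1 z : z \in s1 -> x1 0%N < z < x1 n := allP in_s1 z.
have notin_s2 z : z \in s2 -> x2 0%N < z < x2 n := allP in_s2 z.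
have -> : 0 \notin s1 by apply/negP => /notin_s1; lra.
have -> : 0 \notin s2 by apply/negP => /notin_s2; lra.
have -> /= : ~~ has (mem s1) s2.
  by apply/hasPn => z /notin_s2 ? ; apply/negP => /notin_s1; lra.
have size_r : (size r <= (n + n).+1)%N.
  apply: leq_trans (size_polyD _ _) _; rewrite size_polyN geq_max addnn -mul2n q_feas.1.
  exact: leq_trans (size_scale_leq _ _) size_p.
by move=> /(_ isT isT); rewrite ltnNge size_r.
Qed.

Lemma Lambda_bounds (R : realType) (mu1 L1 mu2 L2 x : R) :
  mu1 < L1 -> L1 < mu2 -> mu2 < L2 -> Lambda mu1 L1 mu2 L2 x -> mu1 <= x <= L2.
Proof. by move=> ? ? ? [/andP[? ?]|/andP[? ?]]; apply/andP; split; lra. Qed.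

Lemma feasible_chebT_comp (R : realType) (mu1 L1 mu2 L2 : R) n (s : {poly R}) :
  size s = 3%N -> (forall x, Lambda mu1 L1 mu2 L2 x -> -1 <= s.[x] <= 1) ->
  feasible mu1 L1 mu2 L2 n (chebT R n \Po s).
Proof.
move=> size_s s_in; split=> [|x x_in]; last by rewrite horner_comp chebT_bound ?s_in.
apply: leq_trans (size_comp_poly_leq _ _) _.
by rewrite size_s ltnS mulnC leq_mul2l /= -subn1 leq_subLR add1n size_chebT.
Qed.

(** * Sufficiency of equal lengths *)

(* sigma(L1) = sigma(mu2) = -1 and sigma(mu1) = 1; sigma(L2) = 1 exactly when
   L1 - mu1 = L2 - mu2. *)
Definition cheb_sigma (R : fieldType) (mu1 L1 mu2 : R) : {poly R} :=
  (2 / ((L1 - mu1) * (mu2 - mu1))) *: (('X - L1%:P) * ('X - mu2%:P)) - 1.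

Section EqualLengths.

Variables (R : realType) (mu1 L1 mu2 L2 : R).
Hypotheses (mu1_gt0 : 0 < mu1) (mu1_lt_L1 : mu1 < L1) (L1_lt_mu2 : L1 < mu2)
  (equal_lengths : L1 - mu1 = L2 - mu2).

Let D := (L1 - mu1) * (mu2 - mu1).
Let v := (L1 + mu2) / 2.
Let h := (mu2 - L1) / 2.
Let sigma := cheb_sigma mu1 L1 mu2.

Let D_gt0 : 0 < D. Proof. by rewrite mulr_gt0 // subr_gt0 // (lt_trans mu1_lt_L1). Qed.

Let horner_sigma (x : R) : sigma.[x] = 2 / D * ((x - v) ^+ 2 - h ^+ 2) - 1.
Proof.
rewrite /sigma /cheb_sigma hornerD hornerN hornerZ hornerM !hornerXsubC hornerC.
by rewrite /v /h /D; field; rewrite !subr_eq0 !gt_eqF // (lt_trans mu1_lt_L1).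
Qed.

Lemma size_cheb_sigma : size sigma = 3%N.
Proof.
have W3 : size (('X - L1%:P) * ('X - mu2%:P)) = 3%N.
  by rewrite size_mul ?polyXsubC_eq0 // !size_XsubC.
have c_neq0 : 2 / D != 0 by rewrite mulf_neq0 ?invr_eq0 ?pnatr_eq0 ?gt_eqF.
by rewrite /sigma /cheb_sigma size_polyDl size_scale // W3 // size_polyN size_poly1.
Qed.

Lemma cheb_sigma_Lambda (x : R) : Lambda mu1 L1 mu2 L2 x -> -1 <= sigma.[x] <= 1.
Proof.
move=> x_in; rewrite horner_sigma.
have [X0 XD] : 0 <= (x - v) ^+ 2 - h ^+ 2 /\ (x - v) ^+ 2 - h ^+ 2 <= D.
  have -> : (x - v) ^+ 2 - h ^+ 2 = (x - L1) * (x - mu2) by rewrite /v /h; field.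
  case: x_in => /andP[x_ge x_le].
    rewrite -mulrNN !opprB; split; first by rewrite mulr_ge0 // subr_ge0 // ltW // (le_lt_trans x_le).
    by rewrite /D ler_pM ?subr_ge0 ?lerB // ltW // (le_lt_trans x_le).
  have -> : D = (L2 - L1) * (L2 - mu2).
    by rewrite /D mulrC; congr (_ * _); move: equal_lengths; lra.
  split; first by rewrite mulr_ge0 // subr_ge0 // ltW // (lt_le_trans L1_lt_mu2).
  by rewrite ler_pM ?subr_ge0 ?lerB // ltW // (lt_le_trans L1_lt_mu2).
have E : 2 / D * ((x - v) ^+ 2 - h ^+ 2) = 2 * (((x - v) ^+ 2 - h ^+ 2) / D).
  by field; rewrite gt_eqF.
have Q0 : 0 <= ((x - v) ^+ 2 - h ^+ 2) / D by rewrite divr_ge0 // ltW.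
have Q1 : ((x - v) ^+ 2 - h ^+ 2) / D <= 1 by rewrite ler_pdivrMr // mul1r.
by rewrite E; apply/andP; split; lra.
Qed.

Let sigma0_gt1 : 1 < sigma.[0].
Proof.
rewrite horner_sigma.
have -> : (0 - v) ^+ 2 - h ^+ 2 = L1 * mu2 by rewrite /v /h; field.
have : 1 < L1 * mu2 / D.
  by rewrite ltr_pdivlMr // mul1r /D; move: mu1_gt0 mu1_lt_L1 L1_lt_mu2; nra.
rewrite mulrAC -mulrA; move: (L1 * mu2 / D) => r; lra.
Qed.

Let branch (y : R) : R := Num.sqrt (h ^+ 2 + (y + 1) * D / 2).

Let branch_sqr (y : R) : -1 <= y -> branch y ^+ 2 = h ^+ 2 + (y + 1) * D / 2.
Proof.
move=> y_ge; rewrite sqr_sqrtr // addr_ge0 ?sqr_ge0 // divr_ge0 // mulr_ge0 ?(ltW D_gt0) //.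
lra.
Qed.

Let sigma_branch (y : R) : -1 <= y -> sigma.[v - branch y] = y /\ sigma.[v + branch y] = y.
Proof.
move=> y_ge; rewrite !horner_sigma.
have -> : (v - branch y - v) ^+ 2 = branch y ^+ 2 by rewrite addrAC subrr add0r sqrrN.
rewrite addrAC subrr add0r branch_sqr //.
by split; field; rewrite gt_eqF.
Qed.

Let branch_lt (y y' : R) : -1 <= y -> y < y' -> branch y < branch y'.
Proof.
move=> y_ge yy'; have pos : 0 < (y' + 1) * D / 2.
  by rewrite divr_gt0 // mulr_gt0 //; lra.
rewrite ltr_sqrt; last by have := sqr_ge0 h; lra.
by rewrite ltrD2l ltr_pM2r ?invr_gt0 // ltr_pM2r // ltrD2r.
Qed.

Let branch_in (y : R) : -1 <= y <= 1 -> h <= branch y <= v - mu1.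
Proof.
move=> /andP[y_ge y_le].
have h_ge0 : 0 <= h by rewrite /h; move: L1_lt_mu2; lra.
have v_ge : 0 <= v - mu1 by rewrite /v; move: mu1_lt_L1 L1_lt_mu2; lra.
have sqr_le a b : 0 <= a -> 0 <= b -> a ^+ 2 <= b ^+ 2 -> a <= b.
  by move=> a_ge0 b_ge0; rewrite ler_sqr ?nnegrE.
have y1_ge0 : 0 <= y + 1 by rewrite -lerBlDr sub0r.
have y1_le : (y + 1) * D / 2 <= D by rewrite ler_pdivrMr // mulrC ler_pM2l //; lra.
have y1D_ge0 : 0 <= (y + 1) * D / 2 by rewrite divr_ge0 // mulr_ge0 // ltW.
apply/andP; split; apply: sqr_le => //; rewrite ?sqrtr_ge0 // branch_sqr //.
  by rewrite lerDl.
have -> : (v - mu1) ^+ 2 = h ^+ 2 + D by rewrite /v /h /D; field.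
by rewrite lerD2l.
Qed.

Lemma cheb_sigma_solution n : (0 < n)%N -> is_solution mu1 L1 mu2 L2 n (chebT R n \Po sigma).
Proof.
move=> n_gt0.
pose c k : R := cos (k%:R * (pi / n%:R)).
have c_in k : -1 <= c k <= 1 by rewrite cos_geN1 cos_le1.
have Nc_in k : -1 <= - c k <= 1 by rewrite lerNr opprK lerNl andbC c_in.
have c_decr k : (k < n)%N -> c k.+1 < c k by exact: cos_natpi_decr.
have vh : v - h = L1 /\ v + h = mu2 by rewrite /v /h; split; field.
have v_mu1 : v + (v - mu1) = L2 by rewrite /v; move: equal_lengths; lra.
(* Preimages under sigma of the extremal points c k of T_n, on each component. *)
pose x1 k := v - branch (c k).
pose x2 k := v + branch (- c k).
have x1_in k : mu1 <= x1 k <= L1.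
  by have /andP[? ?] := branch_in (c_in k); rewrite /x1; move: vh => [? _]; lra.
have x2_in k : mu2 <= x2 k <= L2.
  by have /andP[? ?] := branch_in (Nc_in k); rewrite /x2; move: vh => [_ ?]; lra.
apply: (equioscillation_solution (x1 := x1) (x2 := x2)).
- exact: feasible_chebT_comp size_cheb_sigma cheb_sigma_Lambda.
- by rewrite horner_comp (lt_le_trans ltr01) // chebT_ge1 // ltW // sigma0_gt1.
- by have /andP[? _] := x1_in 0%N; move: mu1_gt0; lra.
- by have /andP[_ ?] := x1_in n; have /andP[? _] := x2_in 0%N; move: L1_lt_mu2; lra.
- move=> k kn; rewrite /x1 /x2; split; rewrite ltrD2l ?ltrN2; apply: branch_lt.
  + by case/andP: (c_in k.+1).
  + exact: c_decr.
  + by case/andP: (Nc_in k).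
  + by rewrite ltrN2 c_decr.
- by move=> k _; split; [left; apply: x1_in | right; apply: x2_in].
move=> k _; have /andP[ck_ge _] := c_in k; have /andP[Nck_ge _] := Nc_in k.
rewrite !horner_comp (sigma_branch ck_ge).1 (sigma_branch Nck_ge).2.
by rewrite chebT_N !chebT_cos_natpi // exprD.
Qed.

End EqualLengths.

(** * Necessity of equal lengths *)

Lemma root2_factor (F : fieldType) (q : {poly F}) a a' :
  a != a' -> root q a -> root q a' -> exists g, q = g * (('X - a%:P) * ('X - a'%:P)).
Proof.
move=> aa' qa qa'.
have [g ->] : exists g, q = g * \prod_(z <- [:: a; a']) ('X - z%:P).
  by apply: uniq_roots_prod_XsubC; rewrite ?uniq_rootsE /= ?qa ?qa' ?inE ?aa'.
by exists g; rewrite !big_cons big_nil mulr1.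
Qed.

Lemma not_solution_of_root2 (R : realType) (mu1 L1 mu2 L2 : R) n (q : {poly R})
    (a a' delta : R) :
  0 < mu1 -> mu1 < L1 -> L1 < mu2 -> mu2 < L2 ->
  a != a' -> root q a -> root q a' -> 0 < a * a' -> 0 < delta ->
  (forall x, Lambda mu1 L1 mu2 L2 x -> delta <= (x - a) * (x - a')) ->
  0 < q.[0] -> ~ is_solution mu1 L1 mu2 L2 n q.
Proof.
move=> mu1_gt0 mu1L1 L1mu2 mu2L2 aa' qa qa' aa'_gt0 delta_gt0 delta_le q0_gt0.
move=> [[size_q q_le1] q_max].
have [g q_eq] := root2_factor aa' qa qa'.
set W := ('X - a%:P) * ('X - a'%:P) in q_eq.
have horner_W x : W.[x] = (x - a) * (x - a') by rewrite hornerM !hornerXsubC.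
have g0_gt0 : 0 < g.[0].
  by move: q0_gt0; rewrite q_eq hornerM horner_W !sub0r mulrNN pmulr_lgt0.
pose e := delta / (L2 - mu1).
have e_gt0 : 0 < e by rewrite divr_gt0 // subr_gt0; lra.
pose p := g * (W - e *: ('X - mu1%:P)).
have horner_p x : p.[x] = g.[x] * ((x - a) * (x - a') - e * (x - mu1)).
  by rewrite hornerM hornerD hornerN hornerZ hornerXsubC horner_W.
have size_W : size W = 3%N by rewrite size_mul ?polyXsubC_eq0 // !size_XsubC.
have g_neq0 : g != 0 by apply: contraTneq g0_gt0 => ->; rewrite horner0 ltxx.
have feasible_p : feasible mu1 L1 mu2 L2 n p.
  split=> [|x x_in].
    have size_V : (size (W - e *: ('X - mu1%:P))%R <= 3)%N.
      apply: leq_trans (size_polyD _ _) _; rewrite size_polyN geq_max size_W leqnn.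
      by rewrite (leq_trans (size_scale_leq _ _)) // size_XsubC.
    apply: leq_trans (size_polyMleq _ _) _; apply: leq_trans size_q.
    have W_neq0 : W != 0 by rewrite -size_poly_eq0 size_W.
    by rewrite q_eq size_mul // size_W -!subn1 leq_sub2r // leq_add2l.
  have /andP[x_ge x_le] := Lambda_bounds mu1L1 L1mu2 mu2L2 x_in.
  have le_delta : e * (x - mu1) <= delta.
    by rewrite /e mulrAC ler_pdivrMr ?subr_gt0 ?ler_wpM2l ?lerB //; lra.
  have := delta_le x x_in; have : 0 <= e * (x - mu1) by rewrite mulr_ge0 ?subr_ge0 // ltW.
  move=> ? ?; have V_le : `|(x - a) * (x - a') - e * (x - mu1)| <= `|(x - a) * (x - a')|.
    by rewrite !ger0_norm; lra.
  rewrite horner_p normrM; apply: le_trans (q_le1 x x_in).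
  by rewrite q_eq hornerM horner_W normrM ler_wpM2l.
have := q_max p feasible_p; rewrite horner_p q_eq hornerM horner_W.
by rewrite ler_pM2l // !sub0r mulrNN mulrN opprK gerDl leNgt mulr_gt0.
Qed.

Definition Lambda_gap (R : realType) (mu1 L1 mu2 L2 l r : R) : Prop :=
  0 <= l < r /\ forall x, Lambda mu1 L1 mu2 L2 x -> x <= l \/ r <= x.

Lemma Lambda_gap_prod_lb (R : realType) (mu1 L1 mu2 L2 l r a a' : R) :
  Lambda_gap mu1 L1 mu2 L2 l r -> l < a < r -> l < a' < r ->
  exists2 delta, 0 < delta &
    forall x, Lambda mu1 L1 mu2 L2 x -> delta <= (x - a) * (x - a').
Proof.
move=> [_ outside] /andP[la ar] /andP[la' a'r].
exists (Num.min ((a - l) * (a' - l)) ((r - a) * (r - a'))).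
  by rewrite lt_min !mulr_gt0 ?subr_gt0.
move=> x /outside [x_le | x_ge].
  rewrite ge_min; apply/orP; left.
  have -> : (x - a) * (x - a') = (a - x) * (a' - x) by ring.
  by apply: ler_pM; lra.
by rewrite ge_min; apply/orP; right; apply: ler_pM; lra.
Qed.

Lemma poly_preimage (R : rcfType) (s : {poly R}) (l r y : R) :
  l <= r -> Num.min s.[l] s.[r] < y < Num.max s.[l] s.[r] ->
  exists2 x, l < x < r & s.[x] = y.
Proof.
move=> lr y_in.
have [|x /[!in_itv] /= x_in /rootP] := @poly_ivtoo _ (s - y%:P) l r lr.
  rewrite !hornerD !hornerN !hornerC; move: y_in.
  by rewrite minEle maxEle; case: ifP => _ /andP[? ?]; nra.
by rewrite hornerD hornerN hornerC => /eqP; rewrite subr_eq0 => /eqP sx; exists x.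
Qed.

Lemma not_solution_of_gap (R : realType) (mu1 L1 mu2 L2 : R) (s : {poly R}) (l r u w : R) :
  0 < mu1 -> mu1 < L1 -> L1 < mu2 -> mu2 < L2 ->
  Lambda_gap mu1 L1 mu2 L2 l r -> 1 < s.[0] ->
  -1 <= u -> u < w -> w <= 1 ->
  Num.min s.[l] s.[r] <= u -> w <= Num.max s.[l] s.[r] ->
  exists2 n, (0 < n)%N & ~ is_solution mu1 L1 mu2 L2 n (chebT R n \Po s).
Proof.
move=> mu1_gt0 mu1L1 L1mu2 mu2L2 gap_lr s0_gt1 u_ge uw w_le min_le le_max.
have [n n_gt0 [y1 [y2 [y12 y1_in y2_in root_y1 root_y2]]]] := chebT_two_roots u_ge uw w_le.
have lr : l <= r by case: gap_lr => /andP[_ /ltW].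
have preim y : u < y < w -> exists2 x, l < x < r & s.[x] = y.
  by move=> /andP[? ?]; apply: poly_preimage => //; apply/andP; split; lra.
have [a a_in sa] := preim y1 y1_in; have [a' a'_in sa'] := preim y2 y2_in.
have [delta delta_gt0 delta_le] := Lambda_gap_prod_lb gap_lr a_in a'_in.
exists n => //; apply: (not_solution_of_root2 (a := a) (a' := a') (delta := delta)) => //.
- by apply: contraNneq y12 => aa'; rewrite -sa -sa' aa'.
- by rewrite /root horner_comp sa.
- by rewrite /root horner_comp sa'.
- case: gap_lr => /andP[l_ge0 _] _; move: a_in a'_in => /andP[la _] /andP[la' _].
  by rewrite mulr_gt0 // (le_lt_trans l_ge0).
- by rewrite horner_comp (lt_le_trans ltr01) // chebT_ge1 // ltW.
Qed.

Lemma solution1_horner0_gt1 (R : realType) (mu1 L1 mu2 L2 : R) (q : {poly R}) :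
  0 < mu1 -> mu1 < L1 -> L1 < mu2 -> mu2 < L2 ->
  is_solution mu1 L1 mu2 L2 1 q -> 1 < q.[0].
Proof.
move=> mu1_gt0 mu1L1 L1mu2 mu2L2 [_ q_max].
pose K := L2 - mu1; have K_gt0 : 0 < K by rewrite subr_gt0; lra.
pose tau := 1 - (2 / K) *: ('X - mu1%:P).
have horner_tau x : tau.[x] = 1 - 2 * ((x - mu1) / K).
  by rewrite hornerD hornerN hornerZ hornerXsubC hornerC mulrAC mulrA.
suff /q_max : feasible mu1 L1 mu2 L2 1 tau.
  rewrite horner_tau sub0r mulNr mulrN opprK; apply: lt_le_trans.
  by rewrite ltrDl mulr_gt0 // divr_gt0.
split=> [|x x_in].
  apply: leq_trans (size_polyD _ _) _; rewrite size_polyN geq_max size_poly1.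
  by rewrite (leq_trans (size_scale_leq _ _)) // size_XsubC.
have /andP[x_ge x_le] := Lambda_bounds mu1L1 L1mu2 mu2L2 x_in.
have : 0 <= (x - mu1) / K <= 1.
  apply/andP; split; first by apply: divr_ge0; [rewrite subr_ge0 | exact: ltW].
  by rewrite ler_pdivrMr // mul1r lerD2r.
by rewrite horner_tau ler_norml => /andP[? ?]; apply/andP; split; lra.
Qed.

Lemma quadratic_eq_values (R : idomainType) (s : {poly R}) (a b : R) :
  size s = 3%N -> a != b -> s.[a] = s.[b] ->
  forall x, s.[x] = s.[a] + s`_2 * ((x - a) * (x - b)).
Proof.
move=> size_s ab sab.
have horner3 y : s.[y] = s`_0 + s`_1 * y + s`_2 * y ^+ 2.
  by rewrite horner_coef size_s !big_ord_recl big_ord0 /= expr0 expr1 /bump /=; ring.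
have /eqP : (a - b) * (s`_1 + s`_2 * (a + b)) = 0.
  by rewrite -[RHS](subrr s.[a]) {2}sab !horner3; ring.
rewrite mulf_eq0 subr_eq0 (negbTE ab) /= addr_eq0 => /eqP s1E x.
by rewrite !horner3 s1E; ring.
Qed.

Lemma coef2_neq0 (R : nzRingType) (s : {poly R}) : size s = 3%N -> s`_2 != 0.
Proof.
move=> size_s; have : lead_coef s != 0 by rewrite lead_coef_eq0 -size_poly_eq0 size_s.
by rewrite lead_coefE size_s.
Qed.

Section ChebyshevSolutions.

Variables (R : realType) (mu1 L1 mu2 L2 : R) (s : {poly R}).
Hypotheses (mu1_gt0 : 0 < mu1) (mu1_lt_L1 : mu1 < L1) (L1_lt_mu2 : L1 < mu2)
  (mu2_lt_L2 : mu2 < L2) (size_s : size s = 3%N)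
  (s_Lambda : forall x, Lambda mu1 L1 mu2 L2 x -> -1 <= s.[x] <= 1)
  (s_solution : forall n, (1 <= n)%N -> is_solution mu1 L1 mu2 L2 n (chebT R n \Po s)).

Let s0_gt1 : 1 < s.[0].
Proof.
apply: (solution1_horner0_gt1 mu1_gt0 mu1_lt_L1 L1_lt_mu2 mu2_lt_L2).
by have := s_solution (isT : (1 <= 1)%N); rewrite chebT1 comp_polyX.
Qed.

Let no_gap (l r u w : R) : Lambda_gap mu1 L1 mu2 L2 l r ->
  -1 <= u -> u < w -> w <= 1 ->
  Num.min s.[l] s.[r] <= u -> w <= Num.max s.[l] s.[r] -> False.
Proof.
move=> gap_lr u_ge uw w_le min_le le_max.
have [n n_gt0 not_sol] := not_solution_of_gap mu1_gt0 mu1_lt_L1 L1_lt_mu2 mu2_lt_L2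
  gap_lr s0_gt1 u_ge uw w_le min_le le_max.
exact: not_sol (s_solution n_gt0).
Qed.

Let Lambda_mu1 : Lambda mu1 L1 mu2 L2 mu1.
Proof. by left; rewrite lexx ltW. Qed.

Let Lambda_L1 : Lambda mu1 L1 mu2 L2 L1.
Proof. by left; rewrite lexx ltW. Qed.

Let Lambda_mu2 : Lambda mu1 L1 mu2 L2 mu2.
Proof. by right; rewrite lexx ltW. Qed.

Let Lambda_L2 : Lambda mu1 L1 mu2 L2 L2.
Proof. by right; rewrite lexx ltW. Qed.

Let gap_L1 (r : R) : L1 < r <= mu2 -> Lambda_gap mu1 L1 mu2 L2 L1 r.
Proof.
move=> /andP[L1r rmu2]; split.
  by rewrite L1r andbT; move: mu1_gt0 mu1_lt_L1; lra.
by move=> x [/andP[_ ?]|/andP[? _]]; [left | right; apply: le_trans rmu2 _].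
Qed.

Lemma chebT_solutions_mu1 : s.[mu1] = 1.
Proof.
have /andP[s_ge s_le] := s_Lambda Lambda_mu1.
apply/eqP; rewrite eq_le s_le leNgt; apply/negP => s_lt1.
apply: (no_gap (l := 0) (r := mu1) (u := s.[mu1]) (w := 1)) => //.
- split; first by rewrite lexx.
  by move=> x /(Lambda_bounds mu1_lt_L1 L1_lt_mu2 mu2_lt_L2) /andP[? _]; right.
- by rewrite ge_min lexx orbT.
- by rewrite le_max ltW.
Qed.

Lemma chebT_solutions_L1_mu2 : s.[L1] = s.[mu2].
Proof.
have /andP[sL1_ge sL1_le] := s_Lambda Lambda_L1.
have /andP[smu2_ge smu2_le] := s_Lambda Lambda_mu2.
have gap := gap_L1 (r := mu2); rewrite L1_lt_mu2 lexx in gap.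
case: (ltgtP s.[L1] s.[mu2]) => // [lt | gt]; exfalso.
- apply: (no_gap (gap isT) sL1_ge lt smu2_le); first by rewrite ge_min lexx.
  by rewrite le_max lexx orbT.
- apply: (no_gap (gap isT) smu2_ge gt sL1_le); first by rewrite ge_min lexx orbT.
  by rewrite le_max lexx.
Qed.

Let k := s`_2.

Let horner_s x : s.[x] = s.[L1] + k * ((x - L1) * (x - mu2)).
Proof. by apply: quadratic_eq_values => //; [rewrite lt_eqF | exact: chebT_solutions_L1_mu2]. Qed.

Let P_gt0 : 0 < (mu1 - L1) * (mu1 - mu2).
Proof. by rewrite -mulrNN !opprB mulr_gt0 // subr_gt0 // (lt_trans mu1_lt_L1). Qed.

Lemma chebT_solutions_L1 : s.[L1] = -1.
Proof.
have k_neq0 : k != 0 := coef2_neq0 size_s.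
have /andP[c_ge c_le] := s_Lambda Lambda_L1.
have c_lt1 : s.[L1] < 1.
  rewrite lt_neqAle c_le andbT; apply: contraNneq k_neq0 => c1.
  have : k * ((mu1 - L1) * (mu1 - mu2)) = 0.
    by move: chebT_solutions_mu1; rewrite horner_s c1; move: (k * _) => t; lra.
  by move/eqP; rewrite mulf_eq0 (gt_eqF P_gt0) orbF.
apply/eqP; rewrite eq_le c_ge andbT leNgt; apply/negP => c_gt.
pose m := (L1 + mu2) / 2.
have m_in : L1 < m <= mu2 by rewrite /m; apply/andP; split; move: L1_lt_mu2; lra.
have sm : s.[m] - s.[L1] = - (k * ((mu2 - L1) / 2) ^+ 2).
  by rewrite horner_s /m; field.
have sm_neq : s.[m] != s.[L1].
  rewrite -subr_eq0 sm oppr_eq0 mulf_neq0 // sqrf_eq0 mulf_neq0 ?invr_eq0 ?pnatr_eq0 //.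
  by rewrite subr_eq0 gt_eqF.
move: sm_neq; case: (ltgtP s.[m] s.[L1]) => // [lt | gt] _.
- apply: (no_gap (gap_L1 m_in) (u := Num.max s.[m] (-1)) (w := s.[L1])) => //.
  + by rewrite le_max lexx orbT.
  + by rewrite gt_max lt c_gt.
  + by rewrite le_max ge_min lexx orbT.
  + by rewrite le_max lexx.
- apply: (no_gap (gap_L1 m_in) (u := s.[L1]) (w := Num.min s.[m] 1)) => //.
  + by rewrite lt_min gt c_lt1.
  + by rewrite ge_min lexx orbT.
  + by rewrite ge_min lexx.
  + by rewrite ge_min le_max lexx orbT.
Qed.

Lemma chebT_solutions_equal_lengths : L1 - mu1 = L2 - mu2.
Proof.
have kP : k * ((mu1 - L1) * (mu1 - mu2)) = 2.
  by move: chebT_solutions_mu1; rewrite horner_s chebT_solutions_L1; move: (k * _) => t; lra.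
have k_gt0 : 0 < k by rewrite -(pmulr_lgt0 _ P_gt0) kP ltr0n.
have s_incr y z : mu2 <= y -> y < z -> s.[y] < s.[z].
  move=> y_ge yz; rewrite (horner_s y) (horner_s z) ltrD2l ltr_pM2l // -subr_gt0.
  have -> : (z - L1) * (z - mu2) - (y - L1) * (y - mu2) = (z - y) * (z + y - L1 - mu2) by ring.
  by rewrite mulr_gt0 // subr_gt0 //; move: L1_lt_mu2; lra.
(* x3 is the mirror image of mu1 about the axis (L1 + mu2) / 2 of s. *)
pose x3 := L1 + mu2 - mu1.
have s_x3 : s.[x3] = 1.
  by rewrite -chebT_solutions_mu1 (horner_s x3) (horner_s mu1) /x3; congr (_ + k * _); ring.
have x3_gt : mu2 < x3 by rewrite /x3; move: mu1_lt_L1; lra.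
have /andP[sL2_ge sL2_le] := s_Lambda Lambda_L2.
case: (ltgtP x3 L2) => [lt | gt | eq]; last by rewrite /x3 in eq; move: eq; lra.
- by have := s_incr x3 L2 (ltW x3_gt) lt; rewrite s_x3; move: sL2_le; lra.
- exfalso; apply: (no_gap (l := L2) (r := x3) (u := s.[L2]) (w := 1)) => //.
  + split; first by rewrite gt andbT; move: mu1_gt0 mu1_lt_L1 L1_lt_mu2 mu2_lt_L2; lra.
    by move=> x /(Lambda_bounds mu1_lt_L1 L1_lt_mu2 mu2_lt_L2) /andP[_ ?]; left.
  + by rewrite -s_x3 s_incr // ltW.
  + by rewrite ge_min lexx.
  + by rewrite le_max s_x3 lexx orbT.
Qed.

End ChebyshevSolutions.

Theorem mainTheorem13 (R : realType) (mu1 L1 mu2 L2 : R) :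
  0 < mu1 -> mu1 < L1 -> L1 < mu2 -> mu2 < L2 ->
  (exists sigma : {poly R},
      size sigma = 3%N /\
      (forall x, Lambda mu1 L1 mu2 L2 x -> -1 <= sigma.[x] <= 1) /\
      (forall n : nat, (1 <= n)%N ->
         is_solution mu1 L1 mu2 L2 n (chebT R n \Po sigma)))
  <-> L1 - mu1 = L2 - mu2.
Proof.
move=> mu1_gt0 mu1_lt_L1 L1_lt_mu2 mu2_lt_L2; split.
  by case=> s [size_s [s_Lambda s_solution]]; apply: (chebT_solutions_equal_lengths (s := s)).
move=> equal_lengths; exists (cheb_sigma mu1 L1 mu2); split; first by apply: size_cheb_sigma.
by split=> [x x_in | n n_gt0]; [apply: (cheb_sigma_Lambda (L2 := L2)) | apply: cheb_sigma_solution].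
Qed.
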